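(* Let $A$ be a finite Abelian group of order $n$, and let $G=\mathrm{Cay}(A,S)$ be a Cayley graph on $A$ of degree $r=|S|$. (a) If $\gcd(n,r)=1$, then every group automorphism of $A$, viewed as a bijection $V(G)=A\to A$, is an $A$-distance antimagic labelling of $G$; in particular $G$ is $A$-distance antimagic. (b) If $\exp(A)$ divides $r$, then every group automorphism $f$ of $A$ is an $A$-distance magic labelling of $G$ with magic constant $\sum_{s\in S} f(s)$; in particular $G$ is $A$-distance magic.
   Context: For an Abelian group $A$ and $S\subseteq A\setminus\{0\}$ with $S=-S$, the Cayley graph $\mathrm{Cay}(A,S)$ has vertex set $A$, with $x,y$ adjacent iff $x-y\in S$. $\exp(A)$ is the least positive integer $m$ with $mx=0$ for all $x\in A$. For a graph $G$ with $n$ vertices and an Abelian group $A$ of order $n$ (written additively), and a bijection $f:V(G)\to A$, the weight of $x$ is $w_f(x)=\sum_{y\in N(x)} f(y)$ computed in $A$ ($N(x)$ the open neighbourhood). $f$ is an $A$-distance antimagic labelling if all weights are pairwise distinct, and an $A$-distance magic labelling if all weights are equal (the common value is the magic constant). $G$ is $A$-distance antimagic (resp. magic) if it admits such a labelling. *)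

From HB Require Import structures.
From mathcomp Require Import all_boot all_order all_algebra all_fingroup all_solvable.
Set Implicit Arguments. Unset Strict Implicit. Unset Printing Implicit Defensive.
Import GRing.Theory.
Local Open Scope ring_scope.

Definition cay_nbhd (A : finZmodType) (S : {set A}) (x : A) : {set A} :=
  [set y : A | x - y \in S].

Definition cay_weight (A : finZmodType) (S : {set A}) (f : A -> A) (x : A) : A :=
  \sum_(y in cay_nbhd S x) f y.

Definition is_dist_antimagic_labelling (A : finZmodType) (S : {set A}) (f : A -> A) :=
  bijective f /\ injective (cay_weight S f).

Definition is_dist_magic_labelling (A : finZmodType) (S : {set A}) (f : A -> A) (c : A) :=
  bijective f /\ forall x, cay_weight S f x = c.

Definition dist_antimagic (A : finZmodType) (S : {set A}) :=
  exists f : A -> A, is_dist_antimagic_labelling S f.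

Definition dist_magic (A : finZmodType) (S : {set A}) :=
  exists (f : A -> A) (c : A), is_dist_magic_labelling S f c.

Definition is_group_aut (A : finZmodType) (f : A -> A) :=
  (forall x y, f (x + y) = f x + f y) /\ bijective f.

Lemma expA_exists (A : finZmodType) :
  exists m, (0 < m)%N && [forall x : A, x *+ m == 0].
Proof.
exists #|A|; apply/andP; split; first by apply/card_gt0P; exists 0.
apply/forallP=> x; change (x *+ #|A| == 0) with ((x ^+ #|A|)%g == 1%g).
by apply/eqP; have := expg_cardG (in_setT x); rewrite cardsT.
Qed.

Definition expA (A : finZmodType) : nat := ex_minn (expA_exists A).

From HB Require Import structures.
From mathcomp Require Import all_boot all_order all_algebra all_fingroup all_solvable.
Local Open Scope ring_scope.
Import GRing.Theory.

(* Let f be an additive bijection of A and r = |S|.  Since S is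
   symmetric, the neighbourhood of x in Cay(A,S) is the translate x + S, so
   by additivity the weight of x is
        w_f(x) = r f(x) + sum_(s in S) f(s) = f(r x) + sum_(s in S) f(s).
   (a) If gcd(|A|, r) = 1, multiplication by r is injective on A (every
       element is killed by |A|, so r x = 0 forces x = 0), hence w_f is the
       composite of injective maps and f is distance antimagic.
   (b) If exp(A) divides r, then r x = 0 for every x, so w_f is constant
       with value sum_(s in S) f(s) and f is distance magic.
   The identity is an automorphism, which gives the existence statements. *)

Section FiniteZmodMultiples.
Variable A : finZmodType.

Lemma mulrn_card_eq0 (x : A) : x *+ #|A| = 0.
Proof.
apply/eqP; change ((x ^+ #|A|)%g == 1%g).
by apply/eqP; have := expg_cardG (in_setT x); rewrite cardsT.
Qed.

(* An element killed by two coprime integers is zero: its order divides both. *)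
Lemma mulrn_coprime_eq0 (x : A) (m n : nat) :
  coprime m n -> x *+ m = 0 -> x *+ n = 0 -> x = 0.
Proof.
move=> cop_mn xm0 xn0.
have ord_m : (#[x]%g %| m)%N by rewrite order_dvdn; apply/eqP.
have ord_n : (#[x]%g %| n)%N by rewrite order_dvdn; apply/eqP.
have : (#[x]%g %| gcdn m n)%N by rewrite dvdn_gcd ord_m ord_n.
by rewrite (eqP cop_mn) order_dvdn => /eqP.
Qed.

Lemma mulrn_inj_coprime (r : nat) :
  coprime #|A| r -> injective (fun x : A => x *+ r).
Proof.
move=> cop_r x y /eqP; rewrite -subr_eq0 -mulrnBl => /eqP xy_r.
apply/eqP; rewrite -subr_eq0; apply/eqP.
exact: mulrn_coprime_eq0 cop_r (mulrn_card_eq0 _) xy_r.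
Qed.

Lemma mulrn_expA_eq0 (r : nat) (x : A) : (expA A %| r)%N -> x *+ r = 0.
Proof.
rewrite /expA; case: ex_minnP => m /andP[_ /forallP kill_m] _.
by case/dvdnP => k ->; rewrite mulnC mulrnA (eqP (kill_m x)) mul0rn.
Qed.

End FiniteZmodMultiples.
Arguments mulrn_inj_coprime {A r}.
Arguments mulrn_expA_eq0 {A r}.

Section AdditiveMaps.
Variables (A : zmodType) (f : A -> A).
Hypothesis f_add : forall x y, f (x + y) = f x + f y.

Lemma additive_map0 : f 0 = 0.
Proof. by apply/(addrI (f 0)); rewrite -f_add !addr0. Qed.

Lemma additive_mapMn (x : A) (n : nat) : f (x *+ n) = f x *+ n.
Proof.
elim: n => [|n IHn]; first by rewrite !mulr0n additive_map0.
by rewrite !mulrS f_add IHn.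
Qed.

End AdditiveMaps.
Arguments additive_map0 {A f}.
Arguments additive_mapMn {A f}.

Section CayleyWeight.
Variables (A : finZmodType) (S : {set A}).
Hypothesis S_sym : forall s, s \in S -> - s \in S.

(* For symmetric S the neighbourhood of x is the translate x + S. *)
Lemma sum_cay_nbhd (F : A -> A) (x : A) :
  \sum_(y in cay_nbhd S x) F y = \sum_(s in S) F (x + s).
Proof.
rewrite (reindex_inj (addrI x)) /=; apply: eq_bigl => s.
rewrite /cay_nbhd inE opprD addrA subrr add0r.
by apply/idP/idP => [/S_sym | /S_sym //]; rewrite opprK.
Qed.

Lemma cay_weight_additive (f : A -> A) :
  (forall x y, f (x + y) = f x + f y) ->
  forall x, cay_weight S f x = f (x *+ #|S|) + \sum_(s in S) f s.
Proof.
move=> f_add x; rewrite /cay_weight sum_cay_nbhd (additive_mapMn f_add).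
under eq_bigr => s _ do rewrite f_add.
by rewrite big_split /= sumr_const.
Qed.

End CayleyWeight.
Arguments cay_weight_additive {A S}.

Theorem mainTheorem2 (A : finZmodType) (S : {set A})
  (S0 : 0 \notin S) (Ssym : forall s, s \in S -> - s \in S) :
  (coprime #|A| #|S| ->
     (forall f : A -> A, is_group_aut f -> is_dist_antimagic_labelling S f)
     /\ dist_antimagic S)
  /\
  ((expA A %| #|S|)%N ->
     (forall f : A -> A, is_group_aut f ->
        is_dist_magic_labelling S f (\sum_(s in S) f s))
     /\ dist_magic S).
Proof.
have id_aut : is_group_aut (@id A) by split => //; exists id.
split=> [cop_r | exp_r].
- have antimagic f : is_group_aut f -> is_dist_antimagic_labelling S f.
    move=> [f_add f_bij]; split=> // x y.
    rewrite !(cay_weight_additive Ssym _ f_add) => /addIr /(bij_inj f_bij).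
    exact: (mulrn_inj_coprime cop_r).
  by split=> //; exists id; apply: antimagic.
- have magic f : is_group_aut f ->
      is_dist_magic_labelling S f (\sum_(s in S) f s).
    move=> [f_add f_bij]; split=> // x.
    by rewrite (cay_weight_additive Ssym _ f_add) mulrn_expA_eq0
               ?(additive_map0 f_add) ?add0r.
  by split=> //; exists id, (\sum_(s in S) s); apply: magic.
Qed.
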